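(* Let $(X,\mathcal{A},\mu)$ be a probability space and let $\{E_i\}_{i\in\mathbb{N}}$ be a sequence of sets in $\mathcal{A}$. Suppose there exists $0<c_0<1$ such that the following holds: for every $\delta>0$ and every pair of integers $q_1<q_2$ there exist an infinite set $\mathcal{I}\subset\mathbb{N}$ and $i_0=i_0(q_1,q_2,\delta)$ such that $\inf\{\mu(E_i):i\in\mathcal{I}\}>c_0$ and $$\mu(A\cap E_i)\le(1+\delta)\mu(A)\mu(E_i)\quad\text{for all }i\in\mathcal{I}\text{ with }i\ge i_0,\qquad\text{where }A=\bigcup_{j=q_1}^{q_2}E_j.$$ Then $\mu(E_\infty)=1$. In particular, $\mu(E_\infty)=1$ whenever $\limsup_{i\to\infty}\mu(E_i)>0$ and condition (M1) holds.
   Context: $E_\infty:=\limsup_{i\to\infty}E_i=\bigcap_{t=1}^\infty\bigcup_{i=t}^\infty E_i$. Condition (M1): for every $\delta>0$ and all natural numbers $q_1<q_2$ there exists $i_0=i_0(q_1,q_2,\delta)$ such that for all $i\ge i_0$, $\mu(A\cap E_i)\le(1+\delta)\mu(A)\mu(E_i)$ where $A=\bigcup_{j=q_1}^{q_2}E_j$. *)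

From HB Require Import structures.
From mathcomp Require Import all_boot all_order all_algebra.
From mathcomp Require Import all_classical all_reals all_analysis.
Set Implicit Arguments. Unset Strict Implicit. Unset Printing Implicit Defensive.
Import Order.TTheory GRing.Theory Num.Theory.

Definition union_range T (E : (set T)^nat) (q1 q2 : nat) : set T :=
  \big[setU/set0]_(q1 <= j < q2.+1) E j.

From HB Require Import structures.
From mathcomp Require Import all_boot all_order all_algebra.
From mathcomp Require Import all_classical all_reals all_analysis.
From mathcomp Require Import lra.
Import Order.TTheory GRing.Theory Num.Theory.
Local Open Scope classical_set_scope.
Local Open Scope ring_scope.

(* Fix a tail start t and delta > 0, and write A_q for E_t u ... u E_q.  If E_i
   has probability p > c and is (1 + delta)-quasi-independent of A_q, then
   P(A_q u E_i) >= a + p - (1 + delta) a p for a = P(A_q), so the deficit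
   1 - (1 + delta) P(A_q) is multiplied by at most 1 - (1 + delta) p <= 1 - c
   when E_i is added.  Iterating, the deficit of the tail union
   \bigcup_(k >= t) E_k is at most (1 - c)^n for every n, hence its probability
   is at least 1/(1 + delta); letting delta -> 0, every tail union is full, and
   so is their decreasing intersection lim_sup_set E.  The limsup condition
   provides such a c, namely half of limsup P(E_i). *)

Lemma union_rangeE T (E : (set T)^nat) q1 q2 :
  union_range E q1 q2 = \bigcup_(j in [set j | (q1 <= j <= q2)%N]) E j.
Proof.
rewrite /union_range -bigcup_seq; congr (\bigcup_(j in _) _).
by apply/seteqP; split => j /=; rewrite mem_index_iota ltnS.
Qed.

Lemma union_range_measurable {d} {T : measurableType d} (E : (set T)^nat) q1 q2 :
  (forall i, measurable (E i)) -> measurable (union_range E q1 q2).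
Proof. by move=> mE; apply: bigsetU_measurable. Qed.

Lemma infinite_set_unbounded {I : set nat} N :
  infinite_set I -> exists2 i, I i & (N <= i)%N.
Proof.
move=> infI; apply: contrapT => noI; apply: infI.
apply: (sub_finite_set _ (finite_II N)) => i Ii /=.
by rewrite ltnNge; apply/negP => Ni; apply: noI; exists i.
Qed.

Lemma limn_esup_le_esups {R : realType} (u : (\bar R)^nat) N :
  (limn_esup u <= esups u N)%E.
Proof.
rewrite limn_esup_lim; apply: lime_le; first exact: is_cvg_esups.
by near=> m; apply: nonincreasing_esups; near: m; exists N.
Unshelve. all: by end_near. Qed.

Lemma lt_limn_esup_often {R : realType} {u : (\bar R)^nat} {x} :
  (x < limn_esup u)%E -> forall N, exists2 n, (N <= n)%N & (x < u n)%E.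
Proof.
move=> xu N; apply: contrapT => noN.
have : (esups u N <= x)%E.
  apply: ge_ereal_sup => _ [n /= Nn <-]; rewrite leNgt; apply/negP => xn.
  by apply: noN; exists n.
by move/(le_trans (limn_esup_le_esups u N)); rewrite leNgt xu.
Qed.

Lemma expr_lt_eventually {R : realType} (x e : R) :
  0 <= x < 1 -> 0 < e -> exists n, x ^+ n < e.
Proof.
move=> /andP[x0 x1] e0; have x1' : `|x| < 1 by rewrite ger0_norm.
have [N _ /(_ N (leqnn N))] := (cvgrPdist_lt _ _).1 (cvg_expr x1') e e0.
by rewrite /= sub0r normrN ger0_norm ?exprn_ge0 //; exists N.
Qed.

(* a, b: probabilities of the old and the enlarged union; p: of the added
   event; r: of its intersection with the old union. *)
Lemma union_deficit_contracts {R : realFieldType} (delta c a b p r u : R) :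
  0 <= delta -> 0 <= c <= 1 -> c < p -> 0 <= u -> a <= b ->
  a + p - r <= b -> r <= (1 + delta) * a * p ->
  1 - (1 + delta) * a <= u -> 1 - (1 + delta) * b <= u * (1 - c).
Proof.
move=> d0 /andP[c0 c1] cp u0 ab apb rap au.
have uc0 : 0 <= u * (1 - c) by apply: mulr_ge0; lra.
have [a_big|a_small] := ltP (1 - (1 + delta) * a) 0; first nra.
have : 1 - (1 + delta) * b <= (1 - (1 + delta) * a) * (1 - (1 + delta) * p) by nra.
have : (1 - (1 + delta) * a) * (1 - (1 + delta) * p) <= (1 - (1 + delta) * a) * (1 - c).
  by apply: ler_wpM2l => //; nra.
have : (1 - (1 + delta) * a) * (1 - c) <= u * (1 - c) by apply: ler_wpM2r; lra.
lra.
Qed.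

Section quasi_independence.
Context {d} {T : measurableType d} {R : realType} (P : probability T R).
Variable E : (set T)^nat.
Hypothesis mE : forall i, measurable (E i).

Local Notation pr X := (fine (P X)).

Definition quasi_independent (delta : R) q1 q2 i :=
  (P (union_range E q1 q2 `&` E i) <=
     (1 + delta)%:E * P (union_range E q1 q2) * P (E i))%E.

Definition often_quasi_independent (c : R) :=
  forall delta : R, 0 < delta -> forall q1 q2, (q1 < q2)%N ->
  forall N, exists2 i, (N <= i)%N &
    (c%:E < P (E i))%E /\ quasi_independent delta q1 q2 i.

Lemma probability_fineE {X} : measurable X -> P X = (pr X)%:E.
Proof. by move=> mX; rewrite fineK // fin_num_measure. Qed.

Lemma pr_ge0 X : 0 <= pr X.
Proof. exact/fine_ge0/measure_ge0. Qed.

Lemma pr_le1 {X} : measurable X -> pr X <= 1.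
Proof. by move=> mX; rewrite -lee_fin -probability_fineE // probability_le1. Qed.

Lemma le_pr {X Y} : measurable X -> measurable Y -> X `<=` Y -> pr X <= pr Y.
Proof.
by move=> mX mY XY; rewrite -lee_fin -!probability_fineE // le_measure // inE.
Qed.

Lemma prU X Y : measurable X -> measurable Y ->
  pr (X `|` Y) = pr X + pr Y - pr (X `&` Y).
Proof.
move=> mX mY; rewrite measureUfinl //; last first.
  exact: le_lt_trans (probability_le1 P mX) (ltry 1).
by rewrite fineB ?fineD ?fin_numD ?fin_num_measure //; exact: measurableI.
Qed.

Lemma union_range_deficit_step (c delta u : R) t q i :
  0 <= delta -> 0 <= c <= 1 -> (t <= q < i)%N -> 0 <= u ->
  (c%:E < P (E i))%E -> quasi_independent delta t q i ->
  1 - (1 + delta) * pr (union_range E t q) <= u ->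
  1 - (1 + delta) * pr (union_range E t i) <= u * (1 - c).
Proof.
move=> d0 c01 /andP[tq qi] u0 cEi indep deficit.
have mA := union_range_measurable E t q mE.
have mB := union_range_measurable E t i mE.
have AB : union_range E t q `<=` union_range E t i.
  rewrite !union_rangeE => x [j /andP[tj jq] Ejx].
  by exists j => //=; rewrite tj (leq_trans jq) // ltnW.
have EiB : E i `<=` union_range E t i.
  rewrite union_rangeE => x Eix; exists i => //=.
  by rewrite leqnn andbT (leq_trans tq) // ltnW.
apply: (@union_deficit_contracts _ delta c _ _ (pr (E i))
  (pr (union_range E t q `&` E i)) u d0 c01 _ u0 (le_pr mA mB AB) _ _ deficit).
- by rewrite -lte_fin -probability_fineE.
- rewrite -prU //; apply: (le_pr (measurableU _ _ mA (mE i)) mB).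
  by rewrite subUset.
- rewrite -lee_fin !EFinM -!probability_fineE //; exact: measurableI.
Qed.

Lemma union_range_deficit_geometric (c delta : R) t :
  0 < c < 1 -> 0 < delta -> often_quasi_independent c -> forall n,
  exists2 q, (t < q)%N & 1 - (1 + delta) * pr (union_range E t q) <= (1 - c) ^+ n.
Proof.
move=> /andP[c0 c1] d0 oqi; elim=> [|n [q tq deficit]].
  exists t.+1 => //; rewrite expr0 lerBlDr lerDl.
  by apply: mulr_ge0; [lra | exact: pr_ge0].
have [i qi [cEi indep]] := oqi delta d0 t q tq q.+1.
exists i; first exact: ltn_trans tq qi.
rewrite exprSr; apply: (@union_range_deficit_step c delta _ t q i) => //.
- exact: ltW.
- by rewrite !ltW.
- by rewrite (ltnW tq).
- by apply: exprn_ge0; lra.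
Qed.

Lemma often_quasi_independent_tail {c : R} t :
  0 < c < 1 -> often_quasi_independent c -> P (\bigcup_(k >= t) E k) = 1%E.
Proof.
move=> c01 oqi; have /andP[c0 c1] := c01.
set F := \bigcup_(k in _) E k.
have mF : measurable F by apply: bigcup_measurable => k _.
rewrite (probability_fineE mF); congr (_%:E); apply/eqP.
rewrite eq_le pr_le1 //=; apply/ler_addgt0Pr => e e0.
have [n cn] : exists n, (1 - c) ^+ n < e / 2.
  by apply: expr_lt_eventually; [apply/andP; split|]; lra.
have [|q tq deficit] := union_range_deficit_geometric c (e / 2) t c01 _ oqi n.
  lra.
have AF : pr (union_range E t q) <= pr F.
  apply: le_pr (union_range_measurable E t q mE) mF _.
  by rewrite union_rangeE => x [j /andP[tj _] Ejx]; exists j.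
have : (1 + e / 2) * pr (union_range E t q) <= (1 + e / 2) * pr F.
  by apply: ler_wpM2l => //; lra.
have := pr_le1 mF; nra.
Qed.

Lemma often_quasi_independent_limsup {c : R} :
  0 < c < 1 -> often_quasi_independent c -> P (lim_sup_set E) = 1%E.
Proof.
move=> c01 oqi.
have tail_full n : P (\bigcup_(k >= n) E k) = 1%E.
  exact: often_quasi_independent_tail n c01 oqi.
have fin0 : (P (\bigcup_(k >= 0) E k) < +oo)%E by rewrite tail_full ltry.
have := lim_sup_set_cvg P E mE fin0.
have -> : (fun n => P (\bigcup_(k >= n) E k)) = cst 1%E.
  by apply/funext => n; exact: tail_full.
by move=> /cvg_lim <- //; exact: lim_cst.
Qed.

Lemma often_quasi_independent_from_infinite (c : R) :
  (forall delta, 0 < delta -> forall q1 q2, (q1 < q2)%N ->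
     exists (I : set nat) (i0 : nat), infinite_set I /\
       (c%:E < ereal_inf [set P (E i) | i in I])%E /\
       forall i, I i -> (i0 <= i)%N -> quasi_independent delta q1 q2 i) ->
  often_quasi_independent c.
Proof.
move=> M delta d0 q1 q2 q12 N.
have [I [i0 [infI [cI indep]]]] := M delta d0 q1 q2 q12.
have [i Ii Ni] := infinite_set_unbounded (maxn N i0) infI.
exists i; first exact: leq_trans (leq_maxl N i0) Ni.
split; last by apply: indep => //; exact: leq_trans (leq_maxr N i0) Ni.
by apply: lt_le_trans cI _; apply: ereal_inf_lbound; exists i.
Qed.

Lemma often_quasi_independent_from_limn_esup :
  (0 < limn_esup (fun i => P (E i)))%E ->
  (forall delta, 0 < delta -> forall q1 q2, (q1 < q2)%N ->
     exists i0, forall i, (i0 <= i)%N -> quasi_independent delta q1 q2 i) ->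
  exists2 c : R, 0 < c < 1 & often_quasi_independent c.
Proof.
set L := limn_esup _ => L0 M1.
have L1 : (L <= 1)%E.
  apply: le_trans (limn_esup_le_esups _ 0) _.
  by apply: ge_ereal_sup => _ [i _ <-]; exact: probability_le1.
have [l Ll] : exists l, L = l%:E by move: L0 L1; case: L => [l| |] //; exists l.
move: L0 L1; rewrite Ll lte_fin lee_fin => l0 l1.
exists (l / 2); first by apply/andP; split; lra.
move=> delta d0 q1 q2 q12 N; have [i0 indep] := M1 delta d0 q1 q2 q12.
have lL : ((l / 2)%:E < L)%E by rewrite Ll lte_fin; lra.
have [i Ni cEi] := lt_limn_esup_often lL (maxn N i0).
exists i; first exact: leq_trans (leq_maxl N i0) Ni.
by split => //; apply: indep; exact: leq_trans (leq_maxr N i0) Ni.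
Qed.

End quasi_independence.

Theorem theorem4 (d : measure_display) (T : measurableType d) (R : realType)
  (P : probability T R) (E : (set T)^nat) (mE : forall i, measurable (E i)) :
  ((exists c0 : R, 0 < c0 < 1 /\
     forall delta : R, 0 < delta -> forall q1 q2 : nat, (q1 < q2)%N ->
       exists (I : set nat) (i0 : nat), infinite_set I /\
         (c0%:E < ereal_inf [set P (E i) | i in I])%E /\
         forall i, I i -> (i0 <= i)%N ->
           (P (union_range E q1 q2 `&` E i) <=
              (1 + delta)%:E * P (union_range E q1 q2) * P (E i))%E) ->
   P (lim_sup_set E) = 1%E)
  /\
  ((0 < limn_esup (fun i => P (E i)))%E ->
   (forall delta : R, 0 < delta -> forall q1 q2 : nat, (q1 < q2)%N ->
      exists i0 : nat, forall i, (i0 <= i)%N ->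
        (P (union_range E q1 q2 `&` E i) <=
           (1 + delta)%:E * P (union_range E q1 q2) * P (E i))%E) ->
   P (lim_sup_set E) = 1%E).
Proof.
split.
  move=> [c [c01 M]]; apply: (often_quasi_independent_limsup P E mE c01).
  exact: often_quasi_independent_from_infinite.
move=> L0 M1; have [c c01 oqi] := often_quasi_independent_from_limn_esup P E mE L0 M1.
exact: (often_quasi_independent_limsup P E mE c01 oqi).
Qed.
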